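(* For every $n\ge1$ and every $0\le\rho\le\rho^*$, $\mathbf{MaxStab}^{\mathrm{sym}}_1(\tfrac12)$ is attained by dictator functions, i.e. for every $f:\{-1,1\}^n\to\{0,1\}$ with $\mathbb Ef(\mathbf X)=\tfrac12$, $$\mathbb E[\Phi^{\mathrm{sym}}_1(T_\rho f(\mathbf X))]\le \tfrac{1-\rho}{2}\ln\tfrac{1-\rho}{2}+\tfrac{1+\rho}{2}\ln\tfrac{1+\rho}{2},$$ the right-hand side being the value for the dictator function $f(\mathbf x)=1\{x_1=1\}$.
   Context: $\mathbf X$ uniform on $\{-1,1\}^n$; $\mathbf Y$ obtained by independently flipping each coordinate of $\mathbf X$ with probability $(1-\rho)/2$; $T_\rho f(\mathbf x)=\mathbb E[f(\mathbf Y)\mid\mathbf X=\mathbf x]$. $\Phi^{\mathrm{sym}}_1(t)=t\ln t+(1-t)\ln(1-t)$ on $[0,1]$ with $0\ln0=0$. $\mathbf{MaxStab}^{\mathrm{sym}}_1(a)$ is the maximum of $\mathbb E[\Phi^{\mathrm{sym}}_1(T_\rho f(\mathbf X))]$ over Boolean $f:\{-1,1\}^n\to\{0,1\}$ with $\mathbb Ef(\mathbf X)=a$. Dictator functions are $1\{x_k=1\}$ and $1\{x_k=-1\}$, $k\in[n]$. $\rho^*\approx0.461491$ is the unique zero in $(0,\tfrac12]$ of $\psi(\rho)=(1+\rho^2)\ln\frac{1+\rho}{2}-(1-\rho)^2\ln\frac{1-\rho}{2}$. *)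

From HB Require Import structures.
From mathcomp Require Import all_boot all_order all_algebra.
From mathcomp Require Import all_classical all_reals.
From mathcomp Require Import exp.
Set Implicit Arguments. Unset Strict Implicit. Unset Printing Implicit Defensive.
Import Order.TTheory GRing.Theory Num.Theory.
Local Open Scope ring_scope.

(* The discrete cube {-1,1}^n: a point is x : 'I_n -> bool,
   with (x i = true) encoding x_i = 1 and (x i = false) encoding x_i = -1. *)
Definition cube (n : nat) := {ffun 'I_n -> bool}.

Definition boolfun (n : nat) := cube n -> bool.

Section Defs.
Variable R : realType.

Definition mean (n : nat) (g : cube n -> R) : R :=
  (2 ^+ n)^-1 * \sum_(x : cube n) g x.

(* P(Y = y | X = x): each coordinate flipped independently w.p. (1-rho)/2. *)
Definition noise_kernel (rho : R) (n : nat) (x y : cube n) : R :=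
  \prod_(i < n) (if x i == y i then (1 + rho) / 2 else (1 - rho) / 2).

Definition T_rho (rho : R) (n : nat) (f : boolfun n) (x : cube n) : R :=
  \sum_(y : cube n) noise_kernel rho x y * (f y)%:R.

(* Phi^sym_1(t) = t ln t + (1-t) ln (1-t); the convention 0 ln 0 = 0 is made
   explicit. *)
Definition xlnx (t : R) : R := if t == 0 then 0 else t * ln t.
Definition Phi_sym1 (t : R) : R := xlnx t + xlnx (1 - t).

Definition stab_sym1 (rho : R) (n : nat) (f : boolfun n) : R :=
  mean (fun x => Phi_sym1 (T_rho rho f x)).

Definition psi (rho : R) : R :=
  (1 + rho ^+ 2) * ln ((1 + rho) / 2) - (1 - rho) ^+ 2 * ln ((1 - rho) / 2).

End Defs.

Definition dictator (n : nat) (k : 'I_n) : boolfun n := fun x => x k.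
Definition antidictator (n : nat) (k : 'I_n) : boolfun n := fun x => ~~ x k.

From HB Require Import structures.
From mathcomp Require Import all_boot all_order all_algebra.
From mathcomp Require Import all_classical all_reals.
From mathcomp Require Import exp.
From mathcomp Require Import topology normedtype sequences derive realfun.
From mathcomp Require Import ring lra.
Import Order.TTheory GRing.Theory Num.Theory numFieldNormedType.Exports.
Local Open Scope ring_scope.
Local Open Scope classical_set_scope.

(* Let f : {-1,1}^n -> {0,1} have mean 1/2 and write f = (1 + g)/2 with the spin
   g = 2f - 1, which is +-1 valued with mean 0.  With w = T_rho g we have
   T_rho f = (1 + w)/2, hence Phi_sym1 (T_rho f) = phi_pm w where
   phi_pm s = (1+s)/2 ln((1+s)/2) + (1-s)/2 ln((1-s)/2); a dictator has value phi_pm rho.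
   The proof combines three facts.
   - Quadratic majorant (calculus): for 0 < r <= 1/2 with psi r >= 0 and
     c = phi_pm'(r)/r, phi_pm s <= phi_pm r + c (s^2 - r|s|) on [-1, 1]; the gap
     vanishes to second order at s = r and equals -psi r/(2r) at s = 1.
   - Sign of psi: psi > 0 near 0, so by the intermediate value theorem and the
     uniqueness of the root rho^*, psi >= 0 on (0, rho^*].
   - Spectral bound: T_t is diagonal in the Walsh basis with eigenvalues t^|S|, so
     for mean-zero g, sum (T_t g)^2 = <g, T_(t^2) g> <= t <g, T_t g> <= t sum |T_t g|.
   Summing the majorant at s = w x over the cube, the quadratic term is nonpositive
   by the spectral bound, which gives E phi_pm (w) <= phi_pm rho. *)

Section Calculus.
Variable R : realType.

Lemma is_derive_ln_comp (g : R -> R) (x dg : R) : 0 < g x ->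
  is_derive x 1 g dg -> is_derive x 1 (fun t => ln (g t)) (dg / g x).
Proof.
move=> gx dgx.
have := is_derive1_comp (is_derive1_ln gx) dgx.
by rewrite mulrC.
Qed.

Lemma mvt_closed {f df : R -> R} {a b : R} : a < b ->
  (forall x, a <= x <= b -> is_derive x 1 f (df x)) ->
  exists c, a < c < b /\ f b - f a = df c * (b - a).
Proof.
move=> ltab hd.
have cont : {within `[a, b], continuous f}.
  apply: derivable_within_continuous => x; rewrite in_itv => /hd hx.
  exact: ex_derive.
have hd' : forall x, x \in `]a, b[%R -> is_derive x 1 f (df x).
  by move=> x; rewrite in_itv /= => /andP[h1 h2]; apply: hd; rewrite !ltW.
have [c hc E] := MVT ltab hd' cont.
by exists c; split => //; move: hc; rewrite in_itv.
Qed.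

Lemma ndecr_of_deriv {f df : R -> R} {a b : R} : a <= b ->
  (forall x, a <= x <= b -> is_derive x 1 f (df x)) ->
  (forall x, a < x < b -> 0 <= df x) -> f a <= f b.
Proof.
move=> ab hd hpos; case: (ltgtP a b) ab => // [ltab|->] _; last by [].
have [c [hc E]] := mvt_closed ltab hd.
by rewrite -subr_ge0 E mulr_ge0 // ?hpos // subr_ge0 ltW.
Qed.

Lemma nincr_of_deriv {f df : R -> R} {a b : R} : a <= b ->
  (forall x, a <= x <= b -> is_derive x 1 f (df x)) ->
  (forall x, a < x < b -> df x <= 0) -> f b <= f a.
Proof.
move=> ab hd hneg.
rewrite -lerN2; apply: (@ndecr_of_deriv (fun x => - f x) (fun x => - df x) a b ab).
  by move=> x hx; apply: is_deriveN; apply: hd.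
by move=> x hx; rewrite oppr_ge0 hneg.
Qed.

Lemma ln_ge_1Vx (x : R) : 0 < x -> 1 - x^-1 <= ln x.
Proof.
move=> x0; have := @le_ln1Dx R (x^-1 - 1).
rewrite (_ : 1 + (x^-1 - 1) = x^-1); last by ring.
rewrite lnV ?posrE // => H.
have : -1 < x^-1 - 1 by rewrite ltrBrDr addrC subrr invr_gt0.
by move/H; lra.
Qed.

Lemma ln_le_subr1 (x : R) : 0 < x -> ln x <= x - 1.
Proof.
move=> x0; have := @le_ln1Dx R (x - 1).
by rewrite (_ : 1 + (x - 1) = x); [apply; lra | ring].
Qed.

End Calculus.

Arguments mvt_closed {R f df a b}.
Arguments ndecr_of_deriv {R f df a b}.
Arguments nincr_of_deriv {R f df a b}.
Arguments ln_ge_1Vx {R x}.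
Arguments ln_le_subr1 {R x}.

Section SymmetricEntropy.
Variable R : realType.

(* Phi_sym1 in the spin parametrisation t = (1 + s)/2, and half its derivative. *)
Definition phi_pm (s : R) : R :=
  (1 + s) / 2 * ln ((1 + s) / 2) + (1 - s) / 2 * ln ((1 - s) / 2).
Definition dphi_pm (s : R) : R := (ln ((1 + s) / 2) - ln ((1 - s) / 2)) / 2.

(* The convention 0 ln 0 = 0 agrees with t ln t since ln 0 = 0 in the library. *)
Lemma xlnxE (t : R) : xlnx t = t * ln t.
Proof. by rewrite /xlnx; case: eqP => [->|_]; rewrite ?mul0r. Qed.

Lemma Phi_sym1_pm (s : R) : Phi_sym1 ((1 + s) / 2) = phi_pm s.
Proof.
rewrite /Phi_sym1 !xlnxE /phi_pm.
by rewrite (_ : 1 - (1 + s) / 2 = (1 - s) / 2); last by field.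
Qed.

Lemma phi_pm_even (s : R) : phi_pm (- s) = phi_pm s.
Proof. by rewrite /phi_pm opprK addrC. Qed.

Lemma phi_pm_one : phi_pm 1 = 0.
Proof.
rewrite /phi_pm subrr mul0r mul0r addr0.
by rewrite (_ : (1 + 1) / 2 = 1 :> R) ?ln1 ?mulr0 //; field.
Qed.

Lemma is_derive_ln_halfD {t : R} : -1 < t ->
  is_derive t 1 (fun t => ln ((1 + t) / 2)) (1 + t)^-1.
Proof.
move=> ht.
have h1 : is_derive t (1 : R) (fun t : R => (1 + t) / 2) (2^-1).
  by apply: is_derive_eq; rewrite scaler0 !add0r [_ *: _]mulr1.
have p : 0 < (1 + t) / 2 by lra.
have := @is_derive_ln_comp _ (fun t => (1 + t) / 2) _ _ p h1.
by move/is_derive_eq; apply; field; lra.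
Qed.

Lemma is_derive_ln_halfB {t : R} : t < 1 ->
  is_derive t 1 (fun t => ln ((1 - t) / 2)) (- (1 - t)^-1).
Proof.
move=> ht.
have h1 : is_derive t (1 : R) (fun t : R => (1 - t) / 2) (- 2^-1).
  by apply: is_derive_eq; rewrite !scaler0 !add0r mul1r [_ *: _]mulrN1.
have p : 0 < (1 - t) / 2 by lra.
have := @is_derive_ln_comp _ (fun t => (1 - t) / 2) _ _ p h1.
by move/is_derive_eq; apply; field; lra.
Qed.

Lemma is_derive_phi_pm (t : R) : -1 < t < 1 -> is_derive t 1 phi_pm (dphi_pm t).
Proof.
case/andP=> h1 h2.
have := is_derive_ln_halfD h1; have := is_derive_ln_halfB h2 => Hb Ha.
rewrite /phi_pm /dphi_pm; apply: is_derive_eq; rewrite /GRing.scale /=.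
by field; lra.
Qed.

Lemma is_derive_dphi_pm (t : R) : -1 < t < 1 ->
  is_derive t 1 dphi_pm ((1 - t ^+ 2)^-1).
Proof.
case/andP=> h1 h2.
have := is_derive_ln_halfD h1; have := is_derive_ln_halfB h2 => Hb Ha.
rewrite /dphi_pm; apply: is_derive_eq; rewrite /GRing.scale /=.
have h3 : 1 - t ^+ 2 != 0 by rewrite expr2; apply/eqP; nra.
by field; lra.
Qed.

Lemma dphi_pm_lb (r : R) : 0 < r <= 2^-1 -> 2/3 * r <= dphi_pm r.
Proof.
case/andP=> r0 r1.
have a0 : 0 < (1 + r) / 2 by lra.
have b0 : 0 < (1 - r) / 2 by lra.
have := ln_ge_1Vx (divr_gt0 a0 b0).
rewrite ln_div ?posrE // /dphi_pm.
rewrite (_ : 1 - ((1 + r) / 2 / ((1 - r) / 2))^-1 = 2 * r / (1 + r)); last by field; lra.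
have : 4/3 * r <= 2 * r / (1 + r) by rewrite ler_pdivlMr; nra.
lra.
Qed.

End SymmetricEntropy.

Arguments phi_pm {R}.
Arguments dphi_pm {R}.
Arguments is_derive_phi_pm {R t}.
Arguments is_derive_dphi_pm {R t}.
Arguments dphi_pm_lb {R r}.

Section PsiSign.
Variable R : realType.

(* A crude numerical bound, ln 2 <= 5/6, from ln 2 = ln (4/3) + ln (3/2). *)
Lemma ln2_le : ln (2 : R) <= 5/6.
Proof.
rewrite (_ : (2 : R) = 4/3 * (3/2)); last by field.
rewrite lnM ?posrE; try lra.
have := @ln_le_subr1 R (4/3) ltac:(lra); have := @ln_le_subr1 R (3/2) ltac:(lra).
lra.
Qed.

Lemma psi_gt0_small (r : R) : 0 < r <= 1/10 -> 0 < psi r.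
Proof.
case/andP=> r0 r1.
have l2 := ln2_le.
have ea : ln ((1 + r) / 2) = ln (1 + r) - ln 2 by rewrite ln_div // posrE; lra.
have eb : ln ((1 - r) / 2) = ln (1 - r) - ln 2 by rewrite ln_div // posrE; lra.
have la : r / (1 + r) <= ln (1 + r).
  have := @ln_ge_1Vx R (1 + r) ltac:(lra).
  by rewrite (_ : 1 - (1 + r)^-1 = r / (1 + r)); last by field; lra.
have la' : r - r ^+ 2 <= r / (1 + r) by rewrite ler_pdivlMr; [rewrite expr2; nra | lra].
have lb : ln (1 - r) <= - r by have := @ln_le_subr1 R (1 - r) ltac:(lra); lra.
have la0 : 0 <= ln (1 + r) by apply: ln_ge0; lra.
rewrite /psi ea eb; rewrite !expr2 in la' *.
nra.
Qed.

Lemma psi_continuous (a b : R) : 0 < a -> b < 1 ->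
  {within `[a, b], continuous (@psi R)}.
Proof.
move=> a0 b1; apply: derivable_within_continuous => x hx.
have /andP[h1 h2] : a <= x <= b by move: hx; rewrite in_itv.
have := @is_derive_ln_halfD R x ltac:(lra); have := @is_derive_ln_halfB R x ltac:(lra).
move=> Hb Ha; rewrite /psi; exact: ex_derive.
Qed.

(* If rs is the only zero of psi in (0, 1/2], then psi >= 0 on (0, rs]:
   a negative value would produce, by the intermediate value theorem, a zero
   of psi strictly between 1/10 and rs. *)
Lemma psi_ge0_below_root (rs r : R) : 0 < rs <= 2^-1 ->
  (forall x, 0 < x <= 2^-1 -> psi x = 0 -> x = rs) -> 0 < r <= rs -> 0 <= psi r.
Proof.
move=> /andP[rs0 rs1] uniq /andP[r0 r1].
rewrite leNgt; apply/negP => hneg.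
case: (lerP r (1/10)) => hr.
  by have := @psi_gt0_small r ltac:(apply/andP; split; lra); lra.
have hs := @psi_gt0_small (1/10) ltac:(apply/andP; split; lra).
have hv : Num.min (psi (1/10)) (psi r) <= 0 <= Num.max (psi (1/10)) (psi r).
  by rewrite ge_min le_max; apply/andP; split; apply/orP; [right|left]; lra.
have [c hc pc] := IVT (ltW hr) (@psi_continuous (1/10) r ltac:(lra) ltac:(lra)) hv.
move: hc; rewrite in_itv /= => /andP[c1 c2].
have ec := uniq c ltac:(apply/andP; split; lra) pc.
have rc : r = c by apply/eqP; rewrite eq_le c2 ec r1.
by move: hneg; rewrite rc pc ltxx.
Qed.

End PsiSign.

Arguments psi_ge0_below_root {R rs r}.

Section QuadraticMajorant.
Variable R : realType.
Variable r : R.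
Hypothesis r_gt0 : 0 < r.
Hypothesis r_le_half : r <= 2^-1.

(* The coefficient c for which s |-> phi_pm r + c (s^2 - r s) touches phi_pm at r. *)
Definition slope : R := dphi_pm r / r.

Definition gap (t : R) : R := phi_pm t - phi_pm r - slope * (t ^+ 2 - r * t).
Definition gap1 (t : R) : R := dphi_pm t - slope * (2 * t - r).
Definition gap2 (t : R) : R := (1 - t ^+ 2)^-1 - 2 * slope.

(* c >= 2/3, the bound that makes gap2 nonpositive on [0, 1/2]. *)
Lemma slope_ge : 2/3 <= slope.
Proof. by rewrite /slope ler_pdivlMr //; apply: dphi_pm_lb; rewrite r_gt0 r_le_half. Qed.

Lemma slopeMr : slope * r = dphi_pm r.
Proof. by rewrite /slope divfK // gt_eqF. Qed.

Lemma is_derive_gap (t : R) : -1 < t < 1 -> is_derive t 1 gap (gap1 t).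
Proof.
move=> ht; have := is_derive_phi_pm ht => H.
by rewrite /gap /gap1; apply: is_derive_eq; rewrite /GRing.scale /=; ring.
Qed.

Lemma is_derive_gap1 (t : R) : -1 < t < 1 -> is_derive t 1 gap1 (gap2 t).
Proof.
move=> ht; have := is_derive_dphi_pm ht => H.
by rewrite /gap1 /gap2; apply: is_derive_eq; rewrite /GRing.scale /=; ring.
Qed.

Lemma gap_r : gap r = 0.
Proof. by rewrite /gap; ring. Qed.

Lemma gap1_r : gap1 r = 0.
Proof. by rewrite /gap1 -slopeMr; ring. Qed.

Lemma gap2_le (t u : R) : 0 <= t <= u -> u < 1 -> gap2 t <= gap2 u.
Proof.
move=> /andP[t0 tu] u1.
rewrite /gap2 lerD2r lef_pV2 ?posrE ?lerD2l ?lerN2 ?expr2; nra.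
Qed.

Lemma gap2_le0 (t : R) : 0 <= t <= 2^-1 -> gap2 t <= 0.
Proof.
move=> /andP[t0 t1]; have := slope_ge.
have p : 0 < 1 - t ^+ 2 by rewrite expr2; nra.
have : (1 - t ^+ 2)^-1 <= 4/3 by rewrite -div1r ler_pdivrMr // expr2; nra.
by rewrite /gap2; lra.
Qed.

(* Left of r: gap1 decreases to gap1 r = 0, so gap increases to gap r = 0. *)
Lemma gap_le0_left (s : R) : 0 <= s <= r -> gap s <= 0.
Proof.
have r0 := r_gt0; have r1 := r_le_half.
move=> /andP[s0 sr]; rewrite -gap_r; apply: (ndecr_of_deriv sr).
  by move=> x /andP[h1 h2]; apply: is_derive_gap; apply/andP; split; lra.
move=> t /andP[t0 tr]; rewrite -gap1_r; apply: (nincr_of_deriv (ltW tr)).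
  by move=> x /andP[h1 h2]; apply: is_derive_gap1; apply/andP; split; lra.
by move=> x /andP[h1 h2]; apply: gap2_le0; apply/andP; split; lra.
Qed.

Lemma gap1_gt0_persists {t u : R} : r < t -> t <= u -> u < 1 -> 0 < gap1 t -> 0 < gap1 u.
Proof.
have r0 := r_gt0; move=> rt tu u1 gt.
have d1 x : r <= x <= u -> is_derive x 1 gap1 (gap2 x).
  by move=> /andP[h1 h2]; apply: is_derive_gap1; apply/andP; split; lra.
have [xi [/andP[xi1 xi2] E]] : exists xi, r < xi < t /\ gap1 t - gap1 r = gap2 xi * (t - r).
  by apply: mvt_closed rt _ => x /andP[h1 h2]; apply: d1; apply/andP; split; lra.
rewrite gap1_r subr0 in E.
have g2 : 0 < gap2 xi by move: gt; rewrite E pmulr_lgt0 // subr_gt0.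
suff : gap1 t <= gap1 u by lra.
apply: (ndecr_of_deriv tu) => x /andP[h1 h2].
  by apply: d1; apply/andP; split; lra.
by apply/ltW/(lt_le_trans g2); apply: gap2_le; [apply/andP; split | ]; lra.
Qed.

Lemma gap_one : gap 1 = - psi r / (2 * r).
Proof.
rewrite /gap phi_pm_one /slope /psi /phi_pm /dphi_pm.
by field; rewrite gt_eqF.
Qed.

(* Near 1 the term (1 - u)/2 ln ((1 - u)/2) is very negative, so gap u <= gap 1;
   this replaces continuity of gap at 1. *)
Lemma gap_near_one {u : R} : 1 - 2 * expR (- (4 * slope)) <= u -> u < 1 -> gap u <= gap 1.
Proof.
have r0 := r_gt0; move=> eu u1; have := slope_ge => c_ge.
have e0 := expR_gt0 (- (4 * slope)).
have e1 : expR (- (4 * slope)) <= 1 by rewrite expR_le1; lra.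
have lnb : ln ((1 - u) / 2) <= - (4 * slope).
  by rewrite -[X in _ <= X]expRK ler_ln ?posrE; lra.
have ha : (1 + u) / 2 * ln ((1 + u) / 2) <= 0 by apply: mulr_ge0_le0; [lra | apply: ln_le0; lra].
have hb : (1 - u) / 2 * ln ((1 - u) / 2) <= (1 - u) / 2 * (- (4 * slope)).
  by apply: ler_wpM2l => //; lra.
have hm : slope * (1 - u) * (u - r - 1) <= 0 by apply: mulr_ge0_le0; [apply: mulr_ge0|]; lra.
by rewrite /gap phi_pm_one /phi_pm; nra.
Qed.

Hypothesis psi_ge0 : 0 <= psi r.

Lemma gap_one_le0 : gap 1 <= 0.
Proof. by rewrite gap_one mulNr oppr_le0 divr_ge0 // mulr_ge0 // ltW. Qed.

(* Right of r: either gap1 <= 0 on (r, s] (gap decreases from gap r = 0), or gap1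
   turns positive before s and gap then increases towards gap 1 <= 0. *)
Lemma gap_le0_right (s : R) : r < s -> s <= 1 -> gap s <= 0.
Proof.
have r0 := r_gt0; move=> rs s1; have [s_lt1|s_ge1] := ltrP s 1; last first.
  have -> : s = 1 by apply/eqP; rewrite eq_le s1 s_ge1.
  exact: gap_one_le0.
have dgap x : r <= x < 1 -> is_derive x 1 gap (gap1 x).
  by move=> /andP[h1 h2]; apply: is_derive_gap; apply/andP; split; lra.
have [gs_le0|gs_gt0] := lerP (gap1 s) 0.
  rewrite -gap_r; apply: (nincr_of_deriv (ltW rs)).
    by move=> x /andP[h1 h2]; apply: dgap; apply/andP; split; lra.
  move=> x /andP[h1 h2]; rewrite leNgt; apply/negP => hx.
  by have := gap1_gt0_persists h1 (ltW h2) s_lt1 hx; lra.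
pose u := Num.max s (1 - 2 * expR (- (4 * slope))).
have su : s <= u by rewrite le_max lexx.
have eu : 1 - 2 * expR (- (4 * slope)) <= u by rewrite le_max lexx orbT.
have u1 : u < 1 by rewrite gt_max s_lt1 /= ltrBlDr ltrDl mulr_gt0 ?expR_gt0.
apply: (le_trans _ gap_one_le0); apply: (le_trans _ (gap_near_one eu u1)).
apply: (ndecr_of_deriv su) => x /andP[h1 h2].
  by apply: dgap; apply/andP; split; lra.
by apply: ltW; apply: (gap1_gt0_persists rs (ltW h1)) => //; lra.
Qed.

Lemma gap_le0 (s : R) : 0 <= s <= 1 -> gap s <= 0.
Proof.
move=> /andP[s0 s1]; have [sr|rs] := lerP s r.
  by apply: gap_le0_left; rewrite s0 sr.
exact: gap_le0_right.
Qed.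

End QuadraticMajorant.

Arguments slope {R}.

Lemma phi_pm_majorant {R : realType} {r s : R} : 0 < r <= 2^-1 -> 0 <= psi r ->
  `|s| <= 1 -> phi_pm s <= phi_pm r + slope r * (s ^+ 2 - r * `|s|).
Proof.
move=> /andP[r0 r1] hpsi s1.
have := @gap_le0 R r r0 r1 hpsi `|s| ltac:(by rewrite normr_ge0 s1).
rewrite /gap real_normK ?num_real //.
by case: (ler0P s) => hs; rewrite ?ler0_norm ?phi_pm_even ?(ltW hs) //; lra.
Qed.

Section NoiseOperator.
Variable R : realType.
Variable n : nat.
Local Notation K := (@noise_kernel R).

Lemma sum_cube_prod (F : 'I_n -> bool -> R) :
  \sum_(y : cube n) \prod_i F i (y i) = \prod_i \sum_(b : bool) F i b.
Proof. by rewrite bigA_distr_bigA. Qed.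

Lemma sum_cube_const (c : R) : \sum_(x : cube n) c = 2 ^+ n * c.
Proof.
rewrite sumr_const (_ : #|_| = (2 ^ n)%N); last by rewrite card_ffun card_bool card_ord.
by rewrite -[c *+ _]mulr_natl natrX.
Qed.

Lemma prod_half_pow : (2^-1 : R) ^+ n = \prod_(i < n) 2^-1.
Proof. by rewrite prodr_const card_ord. Qed.

Definition flip_prob (t : R) (a b : bool) : R :=
  if a == b then (1 + t) / 2 else (1 - t) / 2.

Lemma flip_prob_sum1 (t : R) (a : bool) : \sum_(b : bool) flip_prob t a b = 1.
Proof. by rewrite big_bool /flip_prob; case: a => /=; field. Qed.

Lemma noise_kernelE (t : R) (x y : cube n) :
  K t x y = \prod_i flip_prob t (x i) (y i).
Proof. by []. Qed.

Lemma noise_kernel_sum1 (t : R) (x : cube n) : \sum_y K t x y = 1.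
Proof.
under eq_bigr do rewrite noise_kernelE.
rewrite (sum_cube_prod (fun i b => flip_prob t (x i) b)).
by rewrite big1 // => i _; rewrite flip_prob_sum1.
Qed.

Lemma noise_kernel_sym (t : R) (x y : cube n) : K t x y = K t y x.
Proof. by apply: eq_bigr => i _; rewrite eq_sym. Qed.

Lemma noise_kernel_ge0 (t : R) (x y : cube n) : -1 <= t <= 1 -> 0 <= K t x y.
Proof.
by case/andP=> t1 t2; apply: prodr_ge0 => i _; rewrite /flip_prob; case: ifP => _; lra.
Qed.

Lemma noise_kernel_comp (t s : R) (x z : cube n) :
  \sum_y K t x y * K s y z = K (t * s) x z.
Proof.
under eq_bigr do rewrite !noise_kernelE -big_split /=.
rewrite (sum_cube_prod (fun i b => flip_prob t (x i) b * flip_prob s b (z i))).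
apply: eq_bigr => i _.
by rewrite big_bool /flip_prob; case: (x i); case: (z i) => /=; field.
Qed.

Lemma noise_kernel0 (x y : cube n) : K 0 x y = (2^-1) ^+ n.
Proof.
rewrite noise_kernelE prod_half_pow.
by apply: eq_bigr => i _; rewrite /flip_prob; case: ifP => _; field.
Qed.

Definition noise_op (t : R) (u : cube n -> R) (x : cube n) : R :=
  \sum_y K t x y * u y.

Definition noise_form (t : R) (u : cube n -> R) : R :=
  \sum_x u x * noise_op t u x.

Lemma noise_op0 (u : cube n -> R) x : noise_op 0 u x = (2^-1) ^+ n * \sum_y u y.
Proof. by rewrite /noise_op mulr_sumr; apply: eq_bigr => y _; rewrite noise_kernel0. Qed.

Lemma noise_op_norm_le1 (t : R) (u : cube n -> R) x : -1 <= t <= 1 ->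
  (forall y, `|u y| <= 1) -> `|noise_op t u x| <= 1.
Proof.
move=> ht hu; rewrite -(noise_kernel_sum1 t x).
apply: le_trans (ler_norm_sum _ _ _) _; apply: ler_sum => y _.
rewrite normrM ger0_norm ?noise_kernel_ge0 //.
by rewrite ler_piMr ?noise_kernel_ge0.
Qed.

(* ||T_t u||^2 = <u, T_(t^2) u>, by self-adjointness and the semigroup property. *)
Lemma sum_noise_op_sq (t : R) (u : cube n -> R) :
  \sum_x noise_op t u x ^+ 2 = noise_form (t * t) u.
Proof.
transitivity (\sum_x \sum_y \sum_z (K t x y * u y) * (K t x z * u z)).
  by apply: eq_bigr => x _; rewrite expr2 big_distrlr.
rewrite exchange_big /noise_form; apply: eq_bigr => y _.
rewrite /noise_op big_distrr exchange_big; apply: eq_bigr => z _ /=.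
rewrite -noise_kernel_comp big_distrl big_distrr /=; apply: eq_bigr => x _.
by rewrite (noise_kernel_sym t x y); ring.
Qed.

Definition spin_val (b : bool) : R := if b then 1 else -1.
Definition walsh (S x : cube n) : R :=
  \prod_i (if S i then spin_val (x i) else 1).
Definition eigen (t : R) (S : cube n) : R := \prod_i (if S i then t else 1).

Lemma noise_kernel_walsh (t : R) (x y : cube n) :
  K t x y = (2^-1) ^+ n * \sum_S eigen t S * walsh S x * walsh S y.
Proof.
have E (S : cube n) : eigen t S * walsh S x * walsh S y =
    \prod_i (if S i then t * spin_val (x i) * spin_val (y i) else 1).
  rewrite /eigen /walsh -!big_split; apply: eq_bigr => i _.
  by case: (S i); rewrite /= ?mulr1.
under eq_bigr do rewrite E.
rewrite (sum_cube_prod (fun i b => if b then t * spin_val (x i) * spin_val (y i) else 1)).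
rewrite prod_half_pow -big_split; apply: eq_bigr => i _ /=.
by rewrite big_bool /spin_val /flip_prob; case: (x i); case: (y i) => /=; field.
Qed.

Lemma noise_form_walsh (t : R) (u : cube n -> R) :
  noise_form t u = (2^-1) ^+ n * \sum_S eigen t S * (\sum_x u x * walsh S x) ^+ 2.
Proof.
transitivity (\sum_x \sum_y \sum_S
    (2^-1) ^+ n * (eigen t S * (u x * walsh S x) * (u y * walsh S y))).
  rewrite /noise_form; apply: eq_bigr => x _; rewrite /noise_op big_distrr /=.
  apply: eq_bigr => y _.
  rewrite noise_kernel_walsh big_distrr big_distrl big_distrr /=.
  by apply: eq_bigr => S _; ring.
under eq_bigr => x _ do rewrite exchange_big.
rewrite exchange_big big_distrr /=; apply: eq_bigr => S _.
rewrite expr2 big_distrlr /= !big_distrr /=; apply: eq_bigr => x _.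
by rewrite !big_distrr /=; apply: eq_bigr => y _; ring.
Qed.

Lemma eigen_sq (t : R) (S : cube n) : eigen (t * t) S = eigen t S ^+ 2.
Proof.
by rewrite /eigen expr2 -big_split; apply: eq_bigr => i _ /=; case: (S i); rewrite ?mulr1.
Qed.

Lemma eigen_ge0 (t : R) (S : cube n) : 0 <= t -> 0 <= eigen t S.
Proof. by move=> t0; apply: prodr_ge0 => i _; case: (S i). Qed.

Lemma eigen_le (t : R) (S : cube n) (i : 'I_n) :
  0 <= t <= 1 -> S i -> eigen t S <= t.
Proof.
case/andP=> t0 t1 Si; rewrite /eigen (bigD1 i) //= Si.
have h1 : \prod_(j < n | j != i) (if S j then t else 1) <= 1.
  by apply: prodr_ile1 => j _; case: (S j); apply/andP; split; lra.
have h0 : 0 <= \prod_(j < n | j != i) (if S j then t else 1).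
  by apply: prodr_ge0 => j _; case: (S j).
nra.
Qed.

(* Spectral gap on mean-zero functions: <u, T_(t^2) u> <= t <u, T_t u>, since
   the constant character (eigenvalue 1) is absent and t^(2|S|) <= t t^|S|. *)
Lemma noise_form_sq_le (t : R) (u : cube n -> R) :
  0 <= t <= 1 -> \sum_x u x = 0 ->
  noise_form (t * t) u <= t * noise_form t u.
Proof.
move=> /andP[t0 t1] u0.
rewrite !noise_form_walsh mulrCA; apply: ler_wpM2l; first by rewrite exprn_ge0 ?invr_ge0.
rewrite big_distrr /=; apply: ler_sum => S _; rewrite eigen_sq.
have [/existsP[i Si]|] := boolP [exists i, S i].
  have h1 : eigen t S <= t by apply: (eigen_le _ _ _ _ Si); rewrite t0 t1.
  have h2 := eigen_ge0 t S t0.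
  have h3 := sqr_ge0 (\sum_x u x * walsh S x).
  by rewrite expr2 -mulrA ler_wpM2r // mulr_ge0.
rewrite negb_exists => /forallP hS.
have -> : \sum_x u x * walsh S x = \sum_x u x.
  apply: eq_bigr => x _; rewrite /walsh big1 ?mulr1 // => i _.
  by move: (hS i); case: (S i).
by rewrite u0 expr0n !mulr0.
Qed.

Lemma noise_energy_le (t : R) (u : cube n -> R) : 0 <= t <= 1 ->
  (forall y, `|u y| <= 1) -> \sum_x u x = 0 ->
  \sum_x noise_op t u x ^+ 2 <= t * \sum_x `|noise_op t u x|.
Proof.
move=> /andP[t0 t1] hu u0.
rewrite sum_noise_op_sq.
apply: (le_trans (noise_form_sq_le t u _ u0)); first by rewrite t0 t1.
apply: ler_wpM2l => //; apply: ler_sum => x _.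
apply: le_trans (ler_norm _) _; rewrite normrM.
by rewrite ler_piMl ?normr_ge0.
Qed.

End NoiseOperator.

Arguments flip_prob {R}.
Arguments sum_cube_prod {R n}.
Arguments noise_op {R n} t.

Section BalancedStability.
Variable R : realType.
Variable n : nat.

Definition spin (f : boolfun n) (x : cube n) : R := 2 * (f x)%:R - 1.

Lemma spin_norm (f : boolfun n) x : `|spin f x| = 1.
Proof.
rewrite /spin; case: (f x) => /=; last by rewrite mulr0 sub0r normrN normr1.
by rewrite mulr1 (_ : 2 - 1 = 1 :> R) ?normr1 //; ring.
Qed.

Lemma spin_sum0 {f : boolfun n} : mean (fun x => (f x)%:R) = 2^-1 :> R ->
  \sum_x spin f x = 0.
Proof.
rewrite /mean => hm.
have p : (2 : R) ^+ n != 0 by rewrite expf_neq0 // pnatr_eq0.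
have hf : \sum_x ((f x)%:R : R) = 2 ^+ n / 2 by rewrite -hm mulrA mulfV ?mul1r.
by rewrite /spin sumrB -mulr_sumr /= hf sum_cube_const; field.
Qed.

Lemma T_rho_spin (r : R) (f : boolfun n) x :
  T_rho r f x = (1 + noise_op r (spin f) x) / 2.
Proof.
have -> : noise_op r (spin f) x = \sum_y (2 * (noise_kernel r x y * (f y)%:R) - noise_kernel r x y).
  by apply: eq_bigr => y _; rewrite /spin; ring.
by rewrite sumrB -mulr_sumr noise_kernel_sum1 /T_rho; field.
Qed.

Lemma stab_sym1_spin (r : R) (f : boolfun n) :
  stab_sym1 r f = mean (fun x => phi_pm (noise_op r (spin f) x)).
Proof.
rewrite /stab_sym1 /mean; congr (_ * _).
by apply: eq_bigr => x _; rewrite T_rho_spin Phi_sym1_pm.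
Qed.

(* For r = 0, T_0 (spin f) vanishes; for r > 0 sum the quadratic majorant over
   the cube and remove the quadratic term with the spectral energy bound. *)
Lemma balanced_stab_le (rs r : R) (f : boolfun n) : 0 < rs <= 2^-1 ->
  (forall x, 0 < x <= 2^-1 -> psi x = 0 -> x = rs) -> 0 <= r <= rs ->
  mean (fun x => (f x)%:R) = 2^-1 :> R -> stab_sym1 r f <= phi_pm r.
Proof.
move=> hrs uniq /andP[r0 r_rs] hm.
have r_half : r <= 2^-1 by case/andP: hrs => _ h; lra.
have g0 := spin_sum0 hm.
set w := noise_op r (spin f).
have n2 : (0 : R) < 2 ^+ n by rewrite exprn_gt0.
rewrite stab_sym1_spin /mean ler_pdivrMl // -sum_cube_const.
have [r_gt0|r_eq0] := boolP (0 < r); last first.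
  have -> : r = 0 by apply/eqP; rewrite eq_le r0 andbT leNgt.
  by apply: ler_sum => x _; rewrite /w noise_op0 g0 mulr0.
have hr : 0 < r <= 2^-1 by rewrite r_gt0 r_half.
have hpsi : 0 <= psi r by apply: (psi_ge0_below_root hrs uniq); rewrite r_gt0 r_rs.
have c0 : 0 <= slope r by have := dphi_pm_lb hr; rewrite /slope => hd; apply: divr_ge0; lra.
have wle x : `|w x| <= 1.
  by apply: noise_op_norm_le1 => [|y]; [apply/andP; split; lra | rewrite spin_norm].
apply: le_trans (ler_sum _ (fun x _ => phi_pm_majorant hr hpsi (wle x))) _.
rewrite big_split /= -mulr_sumr sumrB -mulr_sumr gerDl mulr_ge0_le0 // subr_le0.
by apply: noise_energy_le => [|y|//]; [apply/andP; split; lra | rewrite spin_norm].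
Qed.

End BalancedStability.

Arguments balanced_stab_le {R n rs r f}.

Section Dictators.
Variable R : realType.

Lemma T_rho_coord (r : R) n (k : 'I_n) (h : bool -> bool) (x : cube n) :
  T_rho r (fun y => h (y k)) x =
    flip_prob r (x k) true * (h true)%:R + flip_prob r (x k) false * (h false)%:R.
Proof.
have E (y : cube n) : noise_kernel r x y * (h (y k))%:R =
    \prod_i (flip_prob r (x i) (y i) * (if i == k then (h (y i))%:R else 1)).
  rewrite big_split /= noise_kernelE; congr (_ * _).
  by rewrite (bigD1 k) //= eqxx big1 ?mulr1 // => i /negbTE ->.
rewrite /T_rho; under eq_bigr do rewrite E.
rewrite (sum_cube_prod (fun i b => flip_prob r (x i) b * (if i == k then (h b)%:R else 1))).
rewrite (bigD1 k) //= big_bool /= eqxx big1 ?mulr1 // => i /negbTE ik.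
by under eq_bigr do rewrite ik mulr1; rewrite flip_prob_sum1.
Qed.

Lemma coord_stab (r : R) n (k : 'I_n) (h : bool -> bool) : h true = ~~ h false ->
  stab_sym1 r (fun y : cube n => h (y k)) = phi_pm r.
Proof.
move=> hh; rewrite /stab_sym1 /mean.
rewrite (eq_bigr (fun=> phi_pm r)) => [|x _].
  by rewrite sum_cube_const mulKf // expf_neq0 // pnatr_eq0.
rewrite T_rho_coord hh /flip_prob.
case: (h false); case: (x k) => /=;
  by rewrite ?mulr1 ?mulr0 ?addr0 ?add0r ?Phi_sym1_pm ?phi_pm_even.
Qed.

End Dictators.

Arguments coord_stab {R} r {n} k h.

Local Close Scope classical_set_scope.

Theorem corollary2p4 (R : realType) (rhostar : R)
  (Hrs : 0 < rhostar <= 2^-1) (Hpsi : psi rhostar = 0)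
  (Huniq : forall r : R, 0 < r <= 2^-1 -> psi r = 0 -> r = rhostar)
  (n : nat) (Hn : (1 <= n)%N) (rho : R) (Hrho : 0 <= rho <= rhostar) :
  (forall f : boolfun n,
     mean (fun x => (f x)%:R) = 2^-1 :> R ->
     stab_sym1 rho f <=
       (1 - rho) / 2 * ln ((1 - rho) / 2) + (1 + rho) / 2 * ln ((1 + rho) / 2))
  /\
  (forall k : 'I_n,
     stab_sym1 rho (dictator k) =
       (1 - rho) / 2 * ln ((1 - rho) / 2) + (1 + rho) / 2 * ln ((1 + rho) / 2)
   /\ stab_sym1 rho (antidictator k) =
       (1 - rho) / 2 * ln ((1 - rho) / 2) + (1 + rho) / 2 * ln ((1 + rho) / 2)).
Proof.
rewrite addrC -/(phi_pm rho); split.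
  by move=> f; apply: balanced_stab_le Hrs Huniq Hrho.
by move=> k; split; [exact: (coord_stab rho k id) | exact: (coord_stab rho k negb)].
Qed.
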